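(* Let $F$ be a unitary $N=(2,2)$ full vertex operator superalgebra, let $p,q\in\mathbb R$, $a,b\in\mathbb R_{\ge0}$, and let $v\in F^{(p,q)}_{a+p/2,\,b+q/2}$ be nonzero. Then $$\frac{1}{a+1}\Big(2a+\frac c3\big((a+2)^2-\tfrac14\big)\Big)\ge p,\qquad \frac{1}{b+1}\Big(2b+\frac{\bar c}3\big((b+2)^2-\tfrac14\big)\Big)\ge q.$$ In particular, for any $a,b\in\mathbb R_{\ge0}$, $\sum_{p,q\in\mathbb R}\dim F^{(p,q)}_{a+p/2,\,b+q/2}<\infty$.
   Context: A unitary $N=(2,2)$ full VOA is a full vertex operator superalgebra $F=\bigoplus_{(h,\bar h)\in\mathbb R^2}F_{h,\bar h}$ (Moriwaki's axioms: real-analytic locality/associativity of $Y(a,\underline z)=\sum_{r,s}a(r,s)z^{-r-1}\bar z^{-s-1}$, vacuum $\mathbf 1$, $F_{0,0}=\mathbb C\mathbf 1$, $F_{h,\bar h}=0$ unless $h-\bar h\in\frac12\mathbb Z$, $\sum_{h+\bar h<K}\dim F_{h,\bar h}<\infty$ for all $K$, bounded below bigrading, conformal vectors $\omega\in F_{2,0},\bar\omega\in F_{0,2}$ giving commuting Virasoro actions $L(n),\bar L(n)$ of central charges $c,\bar c>0$ with $L(0),\bar L(0)$ the bigrading) with holomorphic $\tau^\pm\in F_{3/2,0}$, $J\in F_{1,0}$ and antiholomorphic $\bar\tau^\pm\in F_{0,3/2}$, $\bar J\in F_{0,1}$ whose modes $G^\pm_r,J_n$ ($Y(\tau^\pm,\underline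 z)=\sum_{r\in\frac12+\mathbb Z}G^\pm_rz^{-r-3/2}$, $Y(J,\underline z)=\sum J_nz^{-n-1}$) and $\bar G^\pm_r,\bar J_n$ satisfy two supercommuting copies of the $N=2$ Neveu–Schwarz relations ($[J_m,J_n]=\frac c3m\delta_{m+n,0}$, $[J_m,G^\pm_r]=\pm G^\pm_{m+r}$, $[L_m,G^\pm_r]=(\frac m2-r)G^\pm_{m+r}$, $[L_m,J_n]=-nJ_{m+n}$, $[G^\pm_r,G^\pm_s]_+=0$, $[G^+_r,G^-_s]_+=L_{r+s}+\frac12(r-s)J_{r+s}+\frac c6(r^2-\frac14)\delta_{r+s,0}$; barred with $\bar c$), $J_0,\bar J_0$ semisimple with real eigenvalues, $J_0-\bar J_0$ integral with $\exp(\pi i(J_0-\bar J_0))$ the parity operator; plus an invariant symmetric bilinear form ($(\mathbf 1,\mathbf 1)=1$, $(u,Y(a,\underline z)v)=(Y(e^{L(1)z+\bar L(1)\bar z}(-1)^{(L(0)-\bar L(0))+2(L(0)-\bar L(0))^2}z^{-2L(0)}\bar z^{-2\bar L(0)}a,\underline z^{-1})u,v)$) and an anti-linear involutive automorphism $\phi$ with $\phi(J)=-J,\phi(\tau^\pm)=\tau^\mp,\phi(\bar J)=-\bar J,\phi(\bar\tau^\pm)=-\bar\tau^\mp$ and $(\phi(\cdot),\cdot)$ positive definite. $F^{(p,q)}_{h,\bar h}=\{v\in F_{h,\bar h}:J_0v=pv,\bar J_0v=qv\}$. *)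

From HB Require Import structures.
From mathcomp Require Import all_boot all_order all_algebra.
From mathcomp Require Import complex.
From mathcomp Require Import reals.
Set Implicit Arguments. Unset Strict Implicit. Unset Printing Implicit Defensive.
Import Order.TTheory GRing.Theory Num.Theory.
Local Open Scope ring_scope.
Local Open Scope complex_scope.

Definition comm {K : nzRingType} {V : lmodType K} (A B : V -> V) (v : V) : V :=
  A (B v) - B (A v).
Definition acomm {K : nzRingType} {V : lmodType K} (A B : V -> V) (v : V) : V :=
  A (B v) + B (A v).
Definition is_linear_op {K : nzRingType} {V : lmodType K} (A : V -> V) : Prop :=
  forall (x : K) (u w : V), A (x *: u + w) = x *: A u + A w.

Definition dlt (R : realType) (m : int) : R := if m == 0 then 1 else 0.

(* Data of a unitary N=(2,2) superconformal structure on a complex vector space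
   V (the underlying space of the full VOA F, an algebraic direct sum of its
   bigraded pieces). *)
Record N22_unitary (R : realType) (V : lmodType R[i]) := {
  cc : R;  ccb : R;
  Lm : int -> V -> V;  Jm : int -> V -> V;  Gp : int -> V -> V;  Gm : int -> V -> V;
  Lb : int -> V -> V;  Jb : int -> V -> V;  Gpb : int -> V -> V; Gmb : int -> V -> V;
  form : V -> V -> R[i];   (* Hermitian form <u,v> = (phi u, v) *)
  vac : V;
  cc_gt0 : 0 < cc;  ccb_gt0 : 0 < ccb;
  ops_linear : forall n, is_linear_op (Lm n) /\ is_linear_op (Jm n) /\ is_linear_op (Gp n) /\
      is_linear_op (Gm n) /\ is_linear_op (Lb n) /\ is_linear_op (Jb n) /\
      is_linear_op (Gpb n) /\ is_linear_op (Gmb n);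
  (* holomorphic N=2 NS algebra, central charge cc *)
  vir : forall (m n : int) v, comm (Lm m) (Lm n) v =
      ((m - n)%:~R)%:C *: Lm (m + n) v
      + ((cc / 12%:R * ((m ^+ 3 - m)%:~R) * dlt R (m + n)))%:C *: v;
  JJ : forall (m n : int) v, comm (Jm m) (Jm n) v = ((cc / 3%:R) * m%:~R * dlt R (m + n))%:C *: v;
  JGp : forall (m k : int) v, comm (Jm m) (Gp k) v = Gp (m + k) v;
  JGm : forall (m k : int) v, comm (Jm m) (Gm k) v = - Gm (m + k) v;
  LGp : forall (m k : int) v, comm (Lm m) (Gp k) v = (m%:~R / 2%:R - (k%:~R + 2%:R^-1))%:C *: Gp (m + k) v;
  LGm : forall (m k : int) v, comm (Lm m) (Gm k) v = (m%:~R / 2%:R - (k%:~R + 2%:R^-1))%:C *: Gm (m + k) v;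
  LJ : forall (m n : int) v, comm (Lm m) (Jm n) v = (- n%:~R)%:C *: Jm (m + n) v;
  GpGp : forall (k l : int) v, acomm (Gp k) (Gp l) v = 0;
  GmGm : forall (k l : int) v, acomm (Gm k) (Gm l) v = 0;
  GpGm : forall (k l : int) v, acomm (Gp k) (Gm l) v =
      Lm (k + l + 1) v + (2%:R^-1 * (k - l)%:~R)%:C *: Jm (k + l + 1) v
      + ((cc / 6%:R) * ((k%:~R + 2%:R^-1) ^+ 2 - 4%:R^-1) * dlt R (k + l + 1))%:C *: v;
  (* antiholomorphic N=2 NS algebra, central charge ccb *)
  virb : forall (m n : int) v, comm (Lb m) (Lb n) v =
      ((m - n)%:~R)%:C *: Lb (m + n) v
      + ((ccb / 12%:R * ((m ^+ 3 - m)%:~R) * dlt R (m + n)))%:C *: v;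
  JJb : forall (m n : int) v, comm (Jb m) (Jb n) v = ((ccb / 3%:R) * m%:~R * dlt R (m + n))%:C *: v;
  JGpb : forall (m k : int) v, comm (Jb m) (Gpb k) v = Gpb (m + k) v;
  JGmb : forall (m k : int) v, comm (Jb m) (Gmb k) v = - Gmb (m + k) v;
  LGpb : forall (m k : int) v, comm (Lb m) (Gpb k) v = (m%:~R / 2%:R - (k%:~R + 2%:R^-1))%:C *: Gpb (m + k) v;
  LGmb : forall (m k : int) v, comm (Lb m) (Gmb k) v = (m%:~R / 2%:R - (k%:~R + 2%:R^-1))%:C *: Gmb (m + k) v;
  LJb : forall (m n : int) v, comm (Lb m) (Jb n) v = (- n%:~R)%:C *: Jb (m + n) v;
  GpGpb : forall (k l : int) v, acomm (Gpb k) (Gpb l) v = 0;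
  GmGmb : forall (k l : int) v, acomm (Gmb k) (Gmb l) v = 0;
  GpGmb : forall (k l : int) v, acomm (Gpb k) (Gmb l) v =
      Lb (k + l + 1) v + (2%:R^-1 * (k - l)%:~R)%:C *: Jb (k + l + 1) v
      + ((ccb / 6%:R) * ((k%:~R + 2%:R^-1) ^+ 2 - 4%:R^-1) * dlt R (k + l + 1))%:C *: v;
  hol_antihol_even : forall (m n : int) v,
      comm (Lm m) (Lb n) v = 0 /\ comm (Lm m) (Jb n) v = 0 /\ comm (Lm m) (Gpb n) v = 0 /\
      comm (Lm m) (Gmb n) v = 0 /\ comm (Jm m) (Lb n) v = 0 /\ comm (Jm m) (Jb n) v = 0 /\
      comm (Jm m) (Gpb n) v = 0 /\ comm (Jm m) (Gmb n) v = 0;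
  hol_antihol_odd : forall (m n : int) v,
      comm (Gp m) (Lb n) v = 0 /\ comm (Gp m) (Jb n) v = 0 /\ comm (Gm m) (Lb n) v = 0 /\
      comm (Gm m) (Jb n) v = 0 /\ acomm (Gp m) (Gpb n) v = 0 /\ acomm (Gp m) (Gmb n) v = 0 /\
      acomm (Gm m) (Gpb n) v = 0 /\ acomm (Gm m) (Gmb n) v = 0;
  form_linr : forall (x : R[i]) u w1 w2, form u (x *: w1 + w2) = x * form u w1 + form u w2;
  form_herm : forall u w, form u w = (form w u)^*;
  form_pos : forall v, v != 0 -> 0 < form v v;
  adj_L : forall n u w, form u (Lm n w) = form (Lm (- n) u) w;
  adj_J : forall n u w, form u (Jm n w) = form (Jm (- n) u) w;
  adj_Gp : forall k u w, form u (Gp k w) = form (Gm (- k - 1) u) w;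
  adj_Gm : forall k u w, form u (Gm k w) = form (Gp (- k - 1) u) w;
  adj_Lb : forall n u w, form u (Lb n w) = form (Lb (- n) u) w;
  adj_Jb : forall n u w, form u (Jb n w) = form (Jb (- n) u) w;
  adj_Gpb : forall k u w, form u (Gpb k w) = form (Gmb (- k - 1) u) w;
  adj_Gmb : forall k u w, form u (Gmb k w) = form (Gpb (- k - 1) u) w;
  decomp : forall v, exists s : seq (V * (R * R * R * R)),
      v = \sum_(x <- s) x.1 /\
      (forall x, x \in s -> [/\ Lm 0 x.1 = (x.2.1.1.1)%:C *: x.1, Lb 0 x.1 = (x.2.1.1.2)%:C *: x.1,
                               Jm 0 x.1 = (x.2.1.2)%:C *: x.1 & Jb 0 x.1 = (x.2.2)%:C *: x.1]);
  spin_cond : forall (h hb : R) v, v != 0 -> Lm 0 v = h%:C *: v -> Lb 0 v = hb%:C *: v ->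
      exists k : int, h - hb = k%:~R / 2%:R;
  charge_cond : forall (p q : R) v, v != 0 -> Jm 0 v = p%:C *: v -> Jb 0 v = q%:C *: v ->
      exists k : int, p - q = k%:~R;
  bounded_below : exists B : R, forall (h hb : R) v, v != 0 ->
      Lm 0 v = h%:C *: v -> Lb 0 v = hb%:C *: v -> B <= h /\ B <= hb;
  finite_graded : forall K : R, exists s : seq V, forall (h hb : R) v,
      Lm 0 v = h%:C *: v -> Lb 0 v = hb%:C *: v -> h + hb < K ->
      exists cs : seq R[i], v = \sum_(i < size s) cs`_i *: s`_i;
  vac_neq0 : vac != 0;
  vac_norm : form vac vac = 1;
  vac_space : forall v, Lm 0 v = 0 -> Lb 0 v = 0 -> exists x : R[i], v = x *: vac
}.

Definition Fpiece (R : realType) (V : lmodType R[i]) (F : N22_unitary V)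
    (h hb p q : R) (v : V) : Prop :=
  [/\ Lm F 0 v = h%:C *: v, Lb F 0 v = hb%:C *: v, Jm F 0 v = p%:C *: v & Jb F 0 v = q%:C *: v].

Definition fin_dim (R : realType) (V : lmodType R[i]) (P : V -> Prop) : Prop :=
  exists s : seq V, forall v, P v -> exists cs : seq R[i], v = \sum_(i < size s) cs`_i *: s`_i.

From Pilot Require Import Defs.
From HB Require Import structures.
From mathcomp Require Import all_boot all_order all_algebra.
From mathcomp Require Import complex.
From mathcomp Require Import reals.
From mathcomp Require Import ring lra.
From Stdlib Require Import Classical_Prop.
Set Implicit Arguments. Unset Strict Implicit. Unset Printing Implicit Defensive.
Import Order.TTheory GRing.Theory Num.Theory.
Local Open Scope ring_scope.
Local Open Scope complex_scope.

(* Let v have L_0-eigenvalue h = a + p/2 and J_0-charge p.  For every integer l,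
   unitarity makes <v, {G^+_{-l-1/2}, G^-_{l+1/2}} v> a sum of two squared norms,
   and the N=2 relations evaluate it to a - l p + (c/6) l (l+1); taking
   l = floor a + 1 yields the bound on p.  Vectors of distinct charge (p, q) are
   orthogonal because J_0 and Jbar_0 are self-adjoint, and for fixed (a, b) the
   bound confines all of them to the finite-dimensional span of the states of
   total weight below a fixed constant, so only finitely many charges occur. *)

Definition charge_bound (R : realFieldType) (c a : R) : R :=
  (a + 1)^-1 * (2%:R * a + c / 3%:R * ((a + 2%:R) ^+ 2 - 4%:R^-1)).

Lemma le_charge_bound (R : realFieldType) (c a n p : R) :
  0 <= a -> 0 < c -> a < n -> 1 <= n -> n <= a + 1 ->
  n * p <= a + c / 6%:R * (n * (n + 1)) -> p <= charge_bound c a.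
Proof.
move=> a_ge0 c_gt0 a_lt_n n_ge1 n_le np_le.
rewrite /charge_bound ler_pdivlMl; last lra.
have [p_le0|p_gt0] := lerP p 0; first nra.
have nn1_le : n * (n + 1) <= (a + 1) * (a + 2%:R) by nra.
have : c / 6%:R * (n * (n + 1)) <= c / 6%:R * ((a + 1) * (a + 2%:R)).
  by rewrite ler_wpM2l // divr_ge0 // ltW.
nra.
Qed.

Section UnitaryN2.

Variables (R : realType) (V : lmodType R[i]) (form : V -> V -> R[i]).
Hypothesis form_linr : forall (x : R[i]) u w1 w2,
  form u (x *: w1 + w2) = x * form u w1 + form u w2.
Hypothesis form_herm : forall u w, form u w = (form w u)^*.
Hypothesis form_pos : forall v, v != 0 -> 0 < form v v.

Lemma formDr u w1 w2 : form u (w1 + w2) = form u w1 + form u w2.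
Proof. by rewrite -[in LHS](scale1r w1) form_linr mul1r. Qed.

Lemma form0r u : form u 0 = 0.
Proof. by apply: (addrI (form u 0)); rewrite -formDr !addr0. Qed.

Lemma formZr u x w : form u (x *: w) = x * form u w.
Proof. by rewrite -[x *: w]addr0 form_linr form0r addr0. Qed.

Lemma formZl x u w : form (x *: u) w = conjc x * form u w.
Proof. by rewrite form_herm formZr rmorphM /= -form_herm. Qed.

Lemma form_sumr u n (w : 'I_n -> V) : form u (\sum_i w i) = \sum_i form u (w i).
Proof. exact: (big_morph _ (formDr u) (form0r u)). Qed.

Lemma form_ge0 w : 0 <= form w w.
Proof. by have [->|/form_pos/ltW //] := eqVneq w 0; rewrite form0r. Qed.

Lemma form_scale_ge0 v (t : R) : v != 0 -> 0 <= form v (t%:C *: v) -> 0 <= t.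
Proof. by move=> /form_pos v_pos; rewrite formZr pmulr_lge0 // lecR. Qed.

Lemma selfadjoint_eigen_orthogonal (A : V -> V) u w (p p' : R) :
  (forall u w, form u (A w) = form (A u) w) ->
  A u = p%:C *: u -> A w = p'%:C *: w -> p != p' -> form u w = 0.
Proof.
move=> A_sa Au Aw pp'; have /eqP := A_sa u w.
rewrite Au Aw formZr formZl conjc_real -subr_eq0 -mulrBl mulf_eq0 subr_eq0.
by rewrite (inj_eq (@complexI _)) eq_sym (negbTE pp') => /eqP.
Qed.

Lemma orthogonal_comb_eq0 n (w : 'I_n -> V) (x : 'I_n -> R[i]) :
  (forall i, w i != 0) -> (forall i j, i != j -> form (w i) (w j) = 0) ->
  \sum_i x i *: w i = 0 -> forall i, x i = 0.
Proof.
move=> w_nz w_orth comb0 i; have := congr1 (form (w i)) comb0.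
rewrite form0r form_sumr (bigD1 i) //= big1 => [|j ji]; last first.
  by rewrite formZr w_orth ?mulr0 // eq_sym.
rewrite addr0 formZr => /eqP; rewrite mulf_eq0 => /orP[/eqP // | /eqP wi0].
by have := form_pos (w_nz i); rewrite wi0 ltxx.
Qed.

Lemma orthogonal_span_size (s : seq V) n (w : 'I_n -> V) :
  (forall i, w i != 0) -> (forall i j, i != j -> form (w i) (w j) = 0) ->
  (forall i, exists cs : seq R[i], w i = \sum_(k < size s) cs`_k *: s`_k) ->
  (n <= size s)%N.
Proof.
move=> w_nz w_orth /fin_all_exists[cs w_cs].
pose C : 'M[R[i]]_(n, size s) := \matrix_(i, k) (cs i)`_k.
rewrite leqNgt; apply/negP => lt_s_n.
have /rowV0Pn[u /sub_kermxP uC0 u_nz] : kermx C != 0.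
  rewrite kermx_eq0 -row_leq_rank -ltnNge.
  exact: leq_ltn_trans (rank_leq_col C) lt_s_n.
have comb0 : \sum_i u 0 i *: w i = 0.
  under eq_bigr => i _ do rewrite w_cs scaler_sumr.
  rewrite exchange_big big1 //= => k _.
  under eq_bigr => i _ do rewrite scalerA.
  rewrite -scaler_suml.
  have -> : \sum_i u 0 i * (cs i)`_k = (u *m C) 0 k.
    by rewrite mxE; apply: eq_bigr => i _; rewrite mxE.
  by rewrite uC0 mxE scale0r.
move/eqP: u_nz; apply; apply/rowP => i.
by rewrite mxE (orthogonal_comb_eq0 w_nz w_orth comb0).
Qed.

Variables (c : R) (L J Gp Gm : int -> V -> V).
Hypothesis adj_Gp : forall k u w, form u (Gp k w) = form (Gm (- k - 1) u) w.
Hypothesis adj_Gm : forall k u w, form u (Gm k w) = form (Gp (- k - 1) u) w.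
Hypothesis GpGm : forall k l v, acomm (Gp k) (Gm l) v =
  L (k + l + 1) v + (2%:R^-1 * (k - l)%:~R)%:C *: J (k + l + 1) v
  + ((c / 6%:R) * ((k%:~R + 2%:R^-1) ^+ 2 - 4%:R^-1) * dlt R (k + l + 1))%:C *: v.

Lemma unitarity_bound v (h p : R) (l : int) :
  v != 0 -> L 0 v = h%:C *: v -> J 0 v = p%:C *: v ->
  (l%:~R + 2^-1) * p <= h + c / 6%:R * (l%:~R * (l%:~R + 1)).
Proof.
move=> v_nz Lv Jv.
have norm_sum : form v (acomm (Gp (- l - 1)) (Gm l) v)
    = form (Gm l v) (Gm l v) + form (Gp (- l - 1) v) (Gp (- l - 1) v).
  rewrite formDr (adj_Gp (- l - 1)) (adj_Gm l v).
  by congr (form (Gm _ v) _ + _); ring.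
move: (addr_ge0 (form_ge0 (Gm l v)) (form_ge0 (Gp (- l - 1) v))).
rewrite -norm_sum GpGm (_ : - l - 1 + l + 1 = 0); last by ring.
rewrite /dlt eqxx mulr1 Lv Jv scalerA -!scalerDl -!rmorphM -!rmorphD.
by move/(form_scale_ge0 v_nz); rewrite !(rmorphB, rmorphN, rmorph1); lra.
Qed.

Hypothesis c_gt0 : 0 < c.

Lemma charge_le_bound v (a p : R) :
  0 <= a -> v != 0 -> L 0 v = (a + p / 2%:R)%:C *: v -> J 0 v = p%:C *: v ->
  p <= charge_bound c a.
Proof.
move=> a_ge0 v_nz Lv Jv; pose n : R := (Num.floor a + 1)%:~R.
have a_lt_n : a < n := floorD1_gt a.
have n_le : n <= a + 1 by rewrite /n rmorphD rmorph1 lerD2r floor_le.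
have n_ge1 : 1 <= n by rewrite /n rmorphD rmorph1 lerDr ler0z floor_ge0.
apply: (le_charge_bound a_ge0 c_gt0 a_lt_n n_ge1 n_le).
by have := unitarity_bound (Num.floor a + 1) v_nz Lv Jv; rewrite -/n; lra.
Qed.

End UnitaryN2.

Lemma bounded_uniq_finite (T : eqType) (P : T -> Prop) m :
  (forall l, uniq l -> (forall x, x \in l -> P x) -> (size l <= m)%N) ->
  exists S : seq T, forall x, P x -> x \in S.
Proof.
move=> bounded; apply: NNPP => no_cover.
have grow n : exists l, [/\ uniq l, forall x, x \in l -> P x & size l = n].
  elim: n => [|n [l [l_uniq lP l_size]]]; first by exists [::].
  have [x [Px x_notin_l]] : exists x, P x /\ x \notin l.
    apply: NNPP => l_covers; apply: no_cover; exists l => x Px.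
    by apply: contraT => x_notin_l; case: l_covers; exists x.
  exists (x :: l); split; first by rewrite /= x_notin_l.
    by move=> y /predU1P[->|/lP].
  by rewrite /= l_size.
have [l [l_uniq lP l_size]] := grow m.+1.
by have := bounded l l_uniq lP; rewrite l_size ltnn.
Qed.

Section FullVOA.

Variables (R : realType) (V : lmodType R[i]) (F : N22_unitary V).

Lemma Fpiece_charge_bounds (p q a b : R) v :
  0 <= a -> 0 <= b -> v != 0 -> Fpiece F (a + p / 2%:R) (b + q / 2%:R) p q v ->
  p <= charge_bound (cc F) a /\ q <= charge_bound (ccb F) b.
Proof.
move=> a_ge0 b_ge0 v_nz [Lv Lbv Jv Jbv]; split.
  exact: (charge_le_bound (form_linr F) (form_pos F) (adj_Gp F) (adj_Gm F) (GpGm F)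
            (cc_gt0 F) a_ge0 v_nz Lv Jv).
exact: (charge_le_bound (form_linr F) (form_pos F) (adj_Gpb F) (adj_Gmb F) (GpGmb F)
          (ccb_gt0 F) b_ge0 v_nz Lbv Jbv).
Qed.

Lemma Fpiece_orthogonal h hb p q h' hb' p' q' u w :
  Fpiece F h hb p q u -> Fpiece F h' hb' p' q' w -> (p, q) != (p', q') ->
  Defs.form F u w = 0.
Proof.
move=> [_ _ Ju Jbu] [_ _ Jw Jbw]; rewrite xpair_eqE negb_and => /orP[p_neq | q_neq].
  exact: (selfadjoint_eigen_orthogonal (form_linr F) (form_herm F) (adj_J F 0) Ju Jw).
exact: (selfadjoint_eigen_orthogonal (form_linr F) (form_herm F) (adj_Jb F 0) Jbu Jbw).
Qed.

Lemma Fpiece_charges_finite a b : 0 <= a -> 0 <= b ->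
  exists S : seq (R * R), forall p q v, v != 0 ->
    Fpiece F (a + p / 2%:R) (b + q / 2%:R) p q v -> (p, q) \in S.
Proof.
move=> a_ge0 b_ge0.
pose K := a + b + (charge_bound (cc F) a + charge_bound (ccb F) b) / 2%:R + 1.
have [s s_span] := finite_graded F K.
suff [S S_occ] : exists S : seq (R * R), forall x,
    (exists v, v != 0 /\ Fpiece F (a + x.1 / 2%:R) (b + x.2 / 2%:R) x.1 x.2 v) -> x \in S.
  by exists S => p q v v_nz v_pq; apply: S_occ; exists v.
apply: (@bounded_uniq_finite _ _ (size s)) => l l_uniq l_occ.
have /fin_all_exists[w w_pq] : forall i : 'I_(size l), exists v, v != 0 /\
    Fpiece F (a + (nth (0, 0) l i).1 / 2%:R) (b + (nth (0, 0) l i).2 / 2%:R)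
      (nth (0, 0) l i).1 (nth (0, 0) l i).2 v.
  by move=> i; apply/l_occ/mem_nth.
apply: (orthogonal_span_size (form_linr F) (form_pos F) (w := w)).
- by move=> i; case: (w_pq i).
- move=> i j ij; apply: (Fpiece_orthogonal (w_pq i).2 (w_pq j).2).
  by rewrite -!surjective_pairing nth_uniq.
- move=> i; have [w_nz w_piece] := w_pq i.
  have [pi_le qi_le] := Fpiece_charge_bounds a_ge0 b_ge0 w_nz w_piece.
  by case: w_piece => Lw Lbw _ _; apply: s_span Lw Lbw _; rewrite /K; lra.
Qed.

Lemma Fpiece_fin_dim h hb p q : fin_dim (Fpiece F h hb p q).
Proof.
have [s s_span] := finite_graded F (h + hb + 1).
by exists s => v [Lv Lbv _ _]; apply: s_span Lv Lbv _; lra.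
Qed.

End FullVOA.

Local Close Scope complex_scope.

Theorem lemma3p30 (R : realType) (V : lmodType R[i]) (F : N22_unitary V) :
  (forall (p q a b : R) (v : V), 0 <= a -> 0 <= b -> v != 0 ->
     Fpiece F (a + p / 2%:R) (b + q / 2%:R) p q v ->
     p <= (a + 1)^-1 * (2%:R * a + cc F / 3%:R * ((a + 2%:R) ^+ 2 - 4%:R^-1)) /\
     q <= (b + 1)^-1 * (2%:R * b + ccb F / 3%:R * ((b + 2%:R) ^+ 2 - 4%:R^-1)))
  /\
  (forall (a b : R), 0 <= a -> 0 <= b ->
     (exists S : seq (R * R), forall (p q : R) (v : V), v != 0 ->
        Fpiece F (a + p / 2%:R) (b + q / 2%:R) p q v -> (p, q) \in S)
     /\ (forall p q : R, fin_dim (Fpiece F (a + p / 2%:R) (b + q / 2%:R) p q))).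
Proof.
split; first exact: Fpiece_charge_bounds.
move=> a b a_ge0 b_ge0; split; first exact: Fpiece_charges_finite.
by move=> p q; apply: Fpiece_fin_dim.
Qed.
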